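(* Let $(T,f,(\le_h))$ be an ordered merge tree and $\tau\colon[0,1]\to T$ a partial in-order curve (in particular, any in-order curve) on $T$. For every $x\in T$ and all $t_1\le t_2$ with $\tau(t_1)=\tau(t_2)=x$, we have $\tau(t)\in T_x$ for all $t\in[t_1,t_2]$.
   Context: A merge tree $(T,f)$: a finite rooted tree $T$ identified with its topological realisation, with a continuous $f\colon T\to\mathbb{R}\cup\{\infty\}$ strictly increasing towards the root, $f(v)=\infty$ iff $v$ is the root; lowest leaf at height $0$. $T_x$ is the subtree of descendants of $x$ (points reachable from $x$ by an $f$-decreasing path); $\mathrm{anc}_h(x)$ the unique ancestor of $x$ at height $h$; $\mathbb{L}_h=\{x:f(x)=h\}$. A layer-order is a family $(\le_h)_{h\ge0}$ of total orders on the $\mathbb{L}_h$ that is consistent ($h_1\le h_2$, $x_1\le_{h_1}x_2$ imply $\mathrm{anc}_{h_2}(x_1)\le_{h_2}\mathrm{anc}_{h_2}(x_2)$); $(T,f,(\le_h))$ is an ordered merge tree. For a curve $\sigma\colon[0,1]\to T$, the number of times $\sigma$ visits $x$ is the number of connected components of $\sigma^{-1}(x)$. $\deg(x)$ is the down-degree of $x$ ($1$ for edge-interior points, $0$ for leaves). For a vertex $v$ and a strict ancestor $x$ of $v$ on the parent edge of $v$ (possibly its upper endpoint), the planted subtree is $T_{x,v}=T_v\cup[x,v]$ with root $x$; it is $\sigma$-unvisited if all its points except possibly $x$ are unvisited; the $\sigma$-unvisited degree of $x$ is the number of $\sigma$-unvisited planted subtrees rooted at $x$. A curve $\tau\colon[0,1]\to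 T$ starting and ending at the root is a partial in-order curve if (1) for all $t_1,t_2$ with $f(\tau(t_1))=f(\tau(t_2))=h$ and $\tau(t_1)<_h\tau(t_2)$ we have $t_1<t_2$, and (2) each $x$ is visited exactly $\deg(x)+1-\kappa$ times, $\kappa$ the $\tau$-unvisited degree of $x$; it is an in-order curve if moreover each $x$ is visited exactly $\deg(x)+1$ times. *)

From HB Require Import structures.
From mathcomp Require Import all_boot all_order all_algebra.
From mathcomp Require Import all_classical all_reals all_analysis.
Set Implicit Arguments. Unset Strict Implicit. Unset Printing Implicit Defensive.
Import Order.TTheory GRing.Theory Num.Theory numFieldNormedType.Exports.
Local Open Scope ring_scope.
Local Open Scope classical_set_scope.

(* Points of the topological realisation of a merge tree.
   The combinatorial tree has vertex set V, root [root], parent map [parent]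
   and vertex heights [fv] (the height of the root, +oo, is not stored).
   A point is either the root [PRoot], or [POn v h]: the unique point on the
   half-open edge [v, parent v) at height h (f is strictly monotone and
   continuous on each edge, hence a homeomorphism onto its image, so points
   of an edge are parametrised by their height). *)
Inductive pt (V : Type) (R : Type) := PRoot | POn of V & R.
Arguments PRoot {V R}.

Section MergeTree.
Variables (R : realType) (V : finType) (root : V) (parent : V -> V) (fv : V -> R).

Definition anc_or_self (w v : V) : Prop := exists n, iter n parent v = w.

Definition children (v : V) := [pred c : V | (c != root) && (parent c == v)].

Definition is_leaf (v : V) : Prop := v != root /\ #|children v| = 0%N.

Definition merge_tree : Prop :=
  [/\ parent root = root,
      (forall v : V, iter #|V| parent v = root),
      (forall v : V, v != root -> parent v != root -> fv v < fv (parent v))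
    & exists2 l, is_leaf l & fv l = 0 /\ forall l', is_leaf l' -> 0 <= fv l'].

Definition valid (x : pt V R) : Prop :=
  match x with
  | PRoot => True
  | POn v h => [/\ v != root, fv v <= h & (parent v = root \/ h < fv (parent v))]
  end.

(* height: None stands for +oo *)
Definition hgt (x : pt V R) : option R :=
  match x with PRoot => None | POn _ h => Some h end.

Definition layer (h : R) (x : pt V R) : Prop := valid x /\ hgt x = Some h.

(* desc y x  <->  y \in T_x  (y is a descendant of x, or x itself) *)
Definition desc (y x : pt V R) : Prop :=
  valid y /\ valid x /\
  match x, y with
  | PRoot, _ => True
  | POn w k, POn v h => anc_or_self w v /\ h <= k
  | POn _ _, PRoot => False
  end.

(* reparametrised height in [0,1] used to define the (path) metric of the
   realisation: edge lengths g(f(parent v)) - g(f(v)) > 0, root at g = 1 *)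
Definition g (x : pt V R) : R :=
  match x with PRoot => 1 | POn _ h => h / (1 + h) end.

(* the tree path distance between x and y is < e
   (geodesic through a common ancestor) *)
Definition close (x y : pt V R) (e : R) : Prop :=
  exists c, [/\ desc x c, desc y c & (g c - g x) + (g c - g y) < e].

Definition curve (s : R -> pt V R) : Prop :=
  (forall t, 0 <= t <= 1 -> valid (s t)) /\
  (forall t, 0 <= t <= 1 -> forall e, 0 < e -> exists2 d, 0 < d &
     forall u, 0 <= u <= 1 -> `|u - t| < d -> close (s u) (s t) e).

Definition preim (s : R -> pt V R) (x : pt V R) : set R :=
  [set t | 0 <= t <= 1 /\ s t = x].

Definition ncomp (A : set R) (n : nat) : Prop :=
  exists C : 'I_n -> set R,
    [/\ injective C,
        (forall i, exists2 t, A t & C i = connected_component A t)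
      & (forall t, A t -> exists i, C i = connected_component A t)].

Definition visits (s : R -> pt V R) (x : pt V R) (n : nat) : Prop :=
  ncomp (preim s x) n.

Definition deg (x : pt V R) : nat :=
  match x with
  | PRoot => #|children root|
  | POn v h => if h == fv v then #|children v| else 1%N
  end.

Definition upper (v : V) : pt V R :=
  if parent v == root then PRoot else POn (parent v) (fv (parent v)).

(* x is a strict ancestor of v on the parent edge of v (possibly its upper
   endpoint), i.e. the planted subtree T_{x,v} is defined *)
Definition planted_at (x : pt V R) (v : V) : Prop :=
  v != root /\ (x = upper v \/ exists2 h, x = POn v h & fv v < h).

Definition in_planted (x : pt V R) (v : V) (y : pt V R) : Prop :=
  [/\ desc y x, y <> x & exists w k, y = POn w k /\ anc_or_self v w].

Definition unvisited (s : R -> pt V R) (y : pt V R) : Prop :=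
  forall t, 0 <= t <= 1 -> s t <> y.

Definition planted_unvisited (s : R -> pt V R) (x : pt V R) (v : V) : Prop :=
  forall y, in_planted x v y -> unvisited s y.

Definition kappa (s : R -> pt V R) (x : pt V R) : nat :=
  #|[pred v : V | `[< planted_at x v /\ planted_unvisited s x v >] ]|.

Definition layer_order (le : R -> pt V R -> pt V R -> Prop) : Prop :=
  (forall h, 0 <= h ->
     [/\ (forall x, layer h x -> le h x x),
         (forall x y, layer h x -> layer h y -> le h x y -> le h y x -> x = y),
         (forall x y z, layer h x -> layer h y -> layer h z ->
                        le h x y -> le h y z -> le h x z)
       & (forall x y, layer h x -> layer h y -> le h x y \/ le h y x)]) /\
  (forall h1 h2 x1 x2 y1 y2, 0 <= h1 -> h1 <= h2 ->
     layer h1 x1 -> layer h1 x2 -> le h1 x1 x2 ->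
     layer h2 y1 -> layer h2 y2 -> desc x1 y1 -> desc x2 y2 ->
     le h2 y1 y2).

Definition partial_inorder (le : R -> pt V R -> pt V R -> Prop)
    (tau : R -> pt V R) : Prop :=
  [/\ curve tau, tau 0 = PRoot, tau 1 = PRoot,
      (forall t1 t2 h, 0 <= t1 <= 1 -> 0 <= t2 <= 1 ->
         hgt (tau t1) = Some h -> hgt (tau t2) = Some h ->
         le h (tau t1) (tau t2) -> tau t1 <> tau t2 -> t1 < t2)
    & (forall x, valid x -> visits tau x (deg x + 1 - kappa tau x)%N)].

Definition inorder (le : R -> pt V R -> pt V R -> Prop)
    (tau : R -> pt V R) : Prop :=
  partial_inorder le tau /\ (forall x, valid x -> visits tau x (deg x + 1)%N).

End MergeTree.

From Pilot Require Import Defs.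
From HB Require Import structures.
From mathcomp Require Import all_boot all_order all_algebra.
From mathcomp Require Import all_classical all_reals all_analysis.
From mathcomp Require Import lra.
Import Order.TTheory GRing.Theory Num.Theory numFieldNormedType.Exports.
Local Open Scope ring_scope.
Local Open Scope classical_set_scope.
Set Implicit Arguments. Unset Strict Implicit. Unset Printing Implicit Defensive.

(* Suppose [tau t1 = tau t2 = x] but [tau t] leaves the subtree [T_x] for
   some [t1 < t < t2]; then [x] lies on the edge above a vertex [w], and so
   does a point [p] slightly above [x] with [x] in [T_p] and [tau t] not in
   [T_p].  Both [T_p] minus [p] and the complement of [T_p] are open, so a
   curve can only enter or leave [T_p] through [p].  Since [tau 0] is the
   root, [tau] passes through [p] in each of [(0, t1)], [(t1, t)] and
   [(t, t2)]; these visits are separated by [t1] and [t], where [tau] is not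
   at [p], so [p] is visited at least three times, whereas a point of
   down-degree one is visited at most twice by a partial in-order curve. *)

Lemma ler_div1D (R : realFieldType) (a b : R) :
  0 <= a -> a <= b -> a / (1 + a) <= b / (1 + b).
Proof.
move=> a0 ab; have ha : 0 < 1 + a by lra. have hb : 0 < 1 + b by lra.
rewrite ler_pdivrMr // mulrAC ler_pdivlMr //; nra.
Qed.

Lemma ltr_div1D (R : realFieldType) (a b : R) :
  0 <= a -> a < b -> a / (1 + a) < b / (1 + b).
Proof.
move=> a0 ab; have ha : 0 < 1 + a by lra. have hb : 0 < 1 + b by lra.
rewrite ltr_pdivrMr // mulrAC ltr_pdivlMr //; nra.
Qed.

Lemma div1D_lt1 (R : realFieldType) (a : R) : 0 <= a -> a / (1 + a) < 1.
Proof. by move=> a0; rewrite ltr_pdivrMr; lra. Qed.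

Section RealIntervals.
Variable R : realType.

Lemma interval_locally_constant (P : R -> Prop) (a b : R) : a <= b ->
  (forall u, a <= u <= b -> exists2 d : R, 0 < d &
     forall v, a <= v <= b -> `|v - u| < d -> (P v <-> P u)) ->
  P a -> P b.
Proof.
move=> ab lc Pa; pose S := [set t | a <= t <= b /\ P t].
have Sa : S a by split; rewrite ?lexx ?ab.
have ubS : ubound S b by move=> t [/andP[_ ?] _].
have supS : has_sup S by split; [exists a | exists b].
set u := sup S; have au : a <= u := sup_upper_bound supS Sa.
have ub : u <= b := ge_sup (ex_intro _ a Sa) ubS.
have [d d0 Pd] := lc u (introT andP (conj au ub)).
have Pu : P u.
  have [t [/andP[a_t t_b] Pt]] := sup_adherent d0 supS; rewrite -/u => ut.
  have tu : t <= u := sup_upper_bound supS (conj (introT andP (conj a_t t_b)) Pt).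
  have t_near : `|t - u| < d by rewrite ltr_norml; apply/andP; split; lra.
  exact: (Pd t (introT andP (conj a_t t_b)) t_near).1.
have [<-//|ltub] := eqVneq u b; have {}ltub : u < b by rewrite lt_neqAle ltub.
have above_sup v : u < v <= b -> v - u < d -> False.
  move=> /andP[uv vb] vud.
  have Sv : S v.
    split; first by apply/andP; split; lra.
    by apply/(Pd v) => //; [apply/andP; split; lra | rewrite gtr0_norm ?subr_gt0].
  by have := sup_upper_bound supS Sv; rewrite -/u; lra.
have [hle|hgt] := leP (u + d / 2) b.
  by exfalso; apply: (above_sup (u + d / 2)); [apply/andP; split|]; lra.
by exfalso; apply: (above_sup b); [apply/andP; split|]; lra.
Qed.

Lemma connected_component_sep (A : set R) (a s b : R) : a < s -> s < b ->
  A a -> A b -> ~ A s -> connected_component A a <> connected_component A b.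
Proof.
move=> a_s s_b Aa Ab nAs E.
have Cb : connected_component A a b by rewrite E; exact: connected_component_refl.
have := (connected_intervalP _).1 (@component_connected _ A a) a b
  (connected_component_refl Aa) Cb s.
by move=> /(_ (introT andP (conj (ltW a_s) (ltW s_b)))) /connected_component_sub.
Qed.

Lemma ncomp_ge3 (A : set R) (n : nat) (a1 s1 a2 s2 a3 : R) : ncomp A n ->
  a1 < s1 -> s1 < a2 -> a2 < s2 -> s2 < a3 -> A a1 -> A a2 -> A a3 ->
  ~ A s1 -> ~ A s2 -> (3 <= n)%N.
Proof.
move=> [C [_ _ Ccov]] h1 h2 h3 h4 A1 A2 A3 N1 N2.
have [i1 e1] := Ccov a1 A1; have [i2 e2] := Ccov a2 A2; have [i3 e3] := Ccov a3 A3.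
have n12 : i1 != i2.
  by apply/eqP => e; apply: (connected_component_sep h1 h2 A1 A2 N1); rewrite -e1 -e2 e.
have n23 : i2 != i3.
  by apply/eqP => e; apply: (connected_component_sep h3 h4 A2 A3 N2); rewrite -e2 -e3 e.
have n13 : i1 != i3.
  apply/eqP => e; apply: (connected_component_sep h1 _ A1 A3 N1); first lra.
  by rewrite -e1 -e3 e.
have uniq_i : uniq [:: i1; i2; i3] by rewrite /= !inE negb_or n12 n13 n23.
by rewrite -[n]card_ord -[3%N]/(size [:: i1; i2; i3]) -(card_uniqP uniq_i) max_card.
Qed.

End RealIntervals.

Section MergeTreeSubtrees.
Variables (R : realType) (V : finType) (root : V) (parent : V -> V) (fv : V -> R).
Hypothesis tree : merge_tree root parent fv.

Local Notation anc := (anc_or_self parent).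
Local Notation valid := (valid root parent fv).
Local Notation desc := (desc root parent fv).
Local Notation upper := (upper root parent fv).
Local Notation close := (Defs.close root parent fv).
Local Notation curve := (Defs.curve root parent fv).

Lemma iter_parent_root n : iter n parent root = root.
Proof. by case: tree => parent_root _ _ _; elim: n => //= n ->; exact: parent_root. Qed.

Lemma anc_refl v : anc v v.
Proof. by exists 0%N. Qed.

Lemma anc_trans a b c : anc a b -> anc b c -> anc a c.
Proof. by move=> [m <-] [n <-]; exists (m + n)%N; rewrite iterD. Qed.

Lemma anc_root a : anc a root -> a = root.
Proof. by move=> [n <-]; rewrite iter_parent_root. Qed.

Lemma anc_parent u w : anc u w -> u != w -> anc u (parent w).
Proof. by move=> [[|n] <-]; rewrite ?eqxx // => _; exists n; rewrite iterSr. Qed.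

Lemma anc_total u w v : anc u v -> anc w v -> anc u w \/ anc w u.
Proof.
move=> [n <-] [m <-]; case: (leqP n m) => [le_nm|/ltnW le_mn].
  by right; exists (m - n)%N; rewrite -iterD subnK.
by left; exists (n - m)%N; rewrite -iterD subnK.
Qed.

Lemma fv_anc a b : anc a b -> a != root -> fv b <= fv a.
Proof.
case: tree => parent_root _ fv_lt_parent _ [n]; elim: n b => [b <- //|n IHn b].
rewrite iterSr => ab ar; have pb_root : parent b != root.
  by apply: contraNneq ar => pb; rewrite -ab pb iter_parent_root.
have b_root : b != root by apply: contraNneq pb_root => ->; rewrite parent_root.
exact: le_trans (ltW (fv_lt_parent _ b_root pb_root)) (IHn _ ab ar).
Qed.

Lemma fv_lt_anc a b h : anc a b -> a != b -> a != root ->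
  valid (POn b h) -> h < fv a.
Proof.
move=> ab a_b ar [_ _ [pb_root|h_lt]].
  by move: (anc_parent ab a_b); rewrite pb_root => /anc_root/eqP; rewrite (negbTE ar).
exact: lt_le_trans h_lt (fv_anc (anc_parent ab a_b) ar).
Qed.

Lemma fv_ge0 v : v != root -> 0 <= fv v.
Proof.
case: tree => _ _ fv_lt_parent [l _ [_ leaf_ge0]] vr.
pose P := [pred u | (u != root) && `[< anc v u >]].
have Pv : P v by rewrite /P /= vr; apply/asboolP; exact: anc_refl.
have [u /andP[ur /asboolP vu] u_min] := Order.TotalTheory.arg_minP fv Pv.
suff /leaf_ge0 : is_leaf root parent u by move/le_trans; apply; exact: fv_anc vu vr.
split=> //; apply/eqP; rewrite -leqn0 leqNgt; apply/negP => /card_gt0P[c].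
rewrite inE => /andP[cr /eqP uc].
have Pc : P c.
  by rewrite /P /= cr; apply/asboolP; apply: anc_trans vu _; exists 1%N; rewrite /= uc.
by have := u_min c Pc; rewrite leNgt -uc fv_lt_parent // uc.
Qed.

Lemma valid_ge0 v h : valid (POn v h) -> 0 <= h.
Proof. by move=> [vr fv_h _]; exact: le_trans (fv_ge0 vr) fv_h. Qed.

Lemma desc_refl x : valid x -> desc x x.
Proof. by case: x => [|v h] vx; do 2 split => //; split => //; exact: anc_refl. Qed.

Lemma desc_trans y c p : desc y c -> desc c p -> desc y p.
Proof.
case: p => [|w k]; case: c => [|u hc];
  case: y => [|v hy] //= [vy [vc dyc]] [_ [vp dcp]] //.
do 2 split => //; case: dyc dcp => uv hyc [wu hck].
by split; [exact: anc_trans wu uv | exact: le_trans hyc hck].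
Qed.

Lemma desc_edge w h k : valid (POn w h) -> valid (POn w k) -> h <= k ->
  desc (POn w h) (POn w k).
Proof. by move=> vh vk hk; do 2 split => //; split; [exact: anc_refl|]. Qed.

Lemma desc_anc_edge u hu w k : anc u w -> valid (POn u hu) -> valid (POn w k) ->
  desc (POn w k) (POn u hu) \/ desc (POn u hu) (POn w k).
Proof.
move=> uw vu vw; have [u_eq|u_w] := eqVneq u w.
  by subst u; case: (lerP k hu) => [kh|/ltW hk]; [left|right]; exact: desc_edge.
left; do 2 split => //; split => //; case: vu => ur fv_hu _.
exact/ltW/(lt_le_trans (fv_lt_anc uw u_w ur vw) fv_hu).
Qed.

Lemma desc_total y c p : desc y c -> desc y p -> desc c p \/ desc p c.
Proof.
case: p => [|w k]; case: c => [|u hc]; case: y => [|v hy]; rewrite /Defs.desc /=.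
all: try by move=> [? [? []]].
all: try by move=> _ [? [? []]].
all: try by move=> [? [? _]] [? [? _]]; left; split; [done|split].
all: try by move=> [? [? _]] [? [? _]]; right; split; [done|split].
move=> [_ [vc [uv _]]] [_ [vp [wv _]]].
have [uw|wu] := anc_total uv wv.
  by have [|] := desc_anc_edge uw vc vp; [right|left].
by have [|] := desc_anc_edge wu vp vc; [left|right].
Qed.

Lemma g_desc y c : desc y c -> g y <= g c.
Proof.
case: c => [|u hc]; case: y => [|v hy] [vy [_ dyc]] //=.
  exact/ltW/div1D_lt1/(valid_ge0 vy).
by case: dyc => _; apply: ler_div1D; exact: valid_ge0 vy.
Qed.

Lemma g_desc_lt y c : desc y c -> y <> c -> g y < g c.
Proof.
case: c => [|u hc]; case: y => [|v hy] [vy [vc dyc]] y_c //=.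
  exact/div1D_lt1/(valid_ge0 vy).
apply: ltr_div1D; first exact: valid_ge0 vy.
case: dyc => uv hy_hc; have [uv_eq|u_v] := eqVneq u v.
  by rewrite lt_neqAle hy_hc andbT; apply: contra_notN y_c => /eqP->; rewrite uv_eq.
case: vc => ur fv_hc _; exact: lt_le_trans (fv_lt_anc uv u_v ur vy) fv_hc.
Qed.

Lemma g_lt_upper w k : valid (POn w k) -> g (POn w k) < g (upper w).
Proof.
move=> vk; have k_ge0 := valid_ge0 vk; rewrite /Defs.upper.
case: ifPn => [_|pw_root]; first exact: div1D_lt1.
by case: vk => _ _ [/eqP pw|]; [rewrite pw in pw_root | exact: ltr_div1D].
Qed.

Lemma edge_ancestor_cases w k c : valid (POn w k) -> desc (POn w k) c ->
  (exists hc, c = POn w hc) \/ g (upper w) <= g c.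
Proof.
move=> vk; case: c => [|u hc] [_ [vc dkc]]; rewrite /Defs.upper.
  right; case: ifPn => // pw_root; exact/ltW/div1D_lt1/fv_ge0.
have [->|u_w] := eqVneq u w; first by left; exists hc.
right; case: dkc => uw _; have u_pw := anc_parent uw u_w.
case: vc => ur fv_hc _; have pw_root : parent w != root.
  by apply: contraNneq ur => pw; rewrite pw in u_pw; rewrite (anc_root u_pw).
rewrite (negbTE pw_root) /=; apply: ler_div1D; first exact: fv_ge0.
exact: le_trans (fv_anc u_pw ur) fv_hc.
Qed.

Lemma close_desc_in p z y : desc z p -> close y z (g p - g z) -> desc y p.
Proof.
move=> dzp [c [dyc dzc close_yz]].
have [dcp|dpc] := desc_total dzc dzp; first exact: desc_trans dyc dcp.
by have := g_desc dpc; have := g_desc dyc; lra.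
Qed.

Lemma close_notdesc_above p z y : g p < g z -> close y z (g z - g p) -> ~ desc y p.
Proof.
move=> gpz [c [dyc dzc close_yz]] dyp.
by have := g_desc dzc; have := g_desc dyc; have := g_desc dyp; lra.
Qed.

Lemma close_notdesc_below w k z y : valid (POn w k) -> ~ desc z (POn w k) ->
  g z <= g (POn w k) -> close y z (g (upper w) - g (POn w k)) -> ~ desc y (POn w k).
Proof.
move=> vk ndz gzk [c [dyc dzc close_yz]] dyk.
have [dck|dkc] := desc_total dyc dyk; first exact/ndz/(desc_trans dzc dck).
have := g_desc dyc; have := g_desc dyk.
have [[hc c_eq]|] := edge_ancestor_cases vk dkc; last by lra.
move=> _ _; subst c; case: z dzc ndz gzk {close_yz} => [|v hz] [vz [_ dzc]] // ndz.
case: dzc => wv hz_hc; rewrite /= leNgt => /negP; apply; apply: ltr_div1D.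
  exact: valid_ge0 vk.
by rewrite ltNge; apply/negP => hz_k; apply: ndz; do 2 split => //.
Qed.

Lemma subtree_locally_constant w k z : valid (POn w k) -> z <> POn w k ->
  exists2 e : R, 0 < e &
    forall y, close y z e -> (desc y (POn w k) <-> desc z (POn w k)).
Proof.
move=> vk z_k; have [dz|ndz] := pselect (desc z (POn w k)).
  exists (g (POn w k) - g z); first by rewrite subr_gt0 g_desc_lt.
  by move=> y /(close_desc_in dz).
have [gkz|gzk] := ltP (g (POn w k)) (g z).
  exists (g z - g (POn w k)); first by rewrite subr_gt0.
  by move=> y /(close_notdesc_above gkz) ndy; split.
exists (g (upper w) - g (POn w k)); first by rewrite subr_gt0 g_lt_upper.
by move=> y /(close_notdesc_below vk ndz gzk) ndy; split.
Qed.

Lemma curve_subtree_locally_constant s w k t : curve s -> valid (POn w k) ->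
  0 <= t <= 1 -> s t <> POn w k ->
  exists2 d : R, 0 < d & forall u, 0 <= u <= 1 -> `|u - t| < d ->
    (desc (s u) (POn w k) <-> desc (s t) (POn w k)).
Proof.
move=> [_ s_cont] vk t01 st_k.
have [e e_gt0 close_e] := subtree_locally_constant vk st_k.
have [d d_gt0 near_d] := s_cont t t01 e e_gt0.
by exists d => // u u01 ut; apply: close_e; exact: near_d.
Qed.

Lemma curve_crosses s w k a b : curve s -> valid (POn w k) ->
  0 <= a -> a <= b -> b <= 1 -> s a <> POn w k -> s b <> POn w k ->
  ~ (desc (s a) (POn w k) <-> desc (s b) (POn w k)) ->
  exists u, a < u < b /\ s u = POn w k.
Proof.
move=> cs vk a_ge0 ab b_le1 sa_k sb_k cross; apply: contrapT => no_visit.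
apply: cross.
apply: (@interval_locally_constant _ (fun u => _ <-> desc (s u) _) a b) => //.
move=> u /andP[au ub]; have u01 : 0 <= u <= 1 by apply/andP; split; lra.
have su_k : s u <> POn w k.
  move=> su_eq; apply: no_visit; exists u; split => //; apply/andP; split.
    by rewrite lt_neqAle au andbT; apply: contra_notN sa_k => /eqP->.
  by rewrite lt_neqAle ub andbT; apply: contra_notN sb_k => /eqP<-.
have [d d_gt0 near_d] := curve_subtree_locally_constant cs vk u01 su_k.
exists d => // v /andP[av vb] vu; have := near_d v _ vu.
by move=> /(_ (introT andP (conj (le_trans a_ge0 av) (le_trans vb b_le1)))); tauto.
Qed.

Lemma edge_point_above w h z : valid (POn w h) -> ~ desc z (POn w h) ->
  exists2 k, h < k & valid (POn w k) /\ ~ desc z (POn w k).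
Proof.
move=> vh ndz; set B := if parent w == root then h + 1 else fv (parent w).
have hB : h < B.
  rewrite /B; case: ifPn => [_|pw_root]; first lra.
  by case: vh => _ _ [/eqP pw|//]; rewrite pw in pw_root.
have [m [hm mB z_above_m]] : exists m, [/\ h < m, m <= B &
    forall v hz, z = POn v hz -> h < hz -> m <= hz].
  case: z {ndz} => [|v hz]; first by exists B.
  have [h_hz|hz_h] := ltP h hz; last by exists B; split=> // _ _ [_ <-]; lra.
  exists (Num.min B hz); rewrite lt_min hB h_hz ge_min lexx; split => //.
  by move=> _ _ [_ <-] _; rewrite ge_min lexx orbT.
exists ((h + m) / 2); first lra.
split.
  case: vh => wr fv_h _; split => //; first lra.
  have [pw_root|pw_root] := eqVneq (parent w) root; [left|right] => //.
  by move: mB; rewrite /B (negbTE pw_root); lra.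
case: z z_above_m ndz => [|v hz] z_above_m ndz [vz [_ dzk]] //.
case: dzk => wv hz_k; apply: ndz; do 2 split => //; split => //.
by rewrite leNgt; apply/negP => /(z_above_m v hz erefl); lra.
Qed.

Lemma deg_edge_interior w k : fv w < k -> deg root parent fv (POn w k) = 1%N.
Proof. by move=> wk; rewrite /= gt_eqF. Qed.

Lemma curve_visits_ge3 s w k t1 t t2 n : curve s -> s 0 = PRoot ->
  valid (POn w k) -> 0 <= t1 -> t1 <= t -> t <= t2 -> t2 <= 1 ->
  s t1 <> POn w k -> s t2 <> POn w k -> desc (s t1) (POn w k) ->
  ~ desc (s t) (POn w k) -> desc (s t2) (POn w k) ->
  visits s (POn w k) n -> (3 <= n)%N.
Proof.
move=> cs s0 vk t1_ge0 t1t tt2 t2_le1 t1_k t2_k d1 nd d2 visits_n.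
have t_k : s t <> POn w k by move=> tk; apply: nd; rewrite tk; exact: desc_refl.
have [u1 [/andP[u1_gt0 u1t1] s_u1]] : exists u, 0 < u < t1 /\ s u = POn w k.
  apply: (curve_crosses cs vk); [lra | lra | lra | by rewrite s0 | by [] |].
  by rewrite s0; case=> _ /(_ d1) [_ [_ []]].
have [u2 [/andP[t1u2 u2t] s_u2]] : exists u, t1 < u < t /\ s u = POn w k.
  by apply: (curve_crosses cs vk); [lra | lra | lra | by [] | by [] | case=> /(_ d1)].
have [u3 [/andP[tu3 u3t2] s_u3]] : exists u, t < u < t2 /\ s u = POn w k.
  by apply: (curve_crosses cs vk); [lra | lra | lra | by [] | by [] | case=> _ /(_ d2)].
have [u1_01 u2_01 u3_01] : [/\ 0 <= u1 <= 1, 0 <= u2 <= 1 & 0 <= u3 <= 1].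
  by split; apply/andP; split; lra.
apply: (ncomp_ge3 visits_n u1t1 t1u2 u2t tu3 (conj u1_01 s_u1) (conj u2_01 s_u2)
  (conj u3_01 s_u3)); by case.
Qed.

Lemma partial_inorder_desc_between (le : R -> pt V R -> pt V R -> Prop)
    (tau : R -> pt V R) x t1 t t2 :
  partial_inorder root parent fv le tau -> valid x ->
  0 <= t1 -> t1 <= t -> t <= t2 -> t2 <= 1 -> tau t1 = x -> tau t2 = x ->
  desc (tau t) x.
Proof.
move=> [cs tau0 _ _ visits_tau] vx t1_ge0 t1t tt2 t2_le1 tau1 tau2.
have vt : valid (tau t) by apply: cs.1; apply/andP; split; lra.
case: x vx tau1 tau2 => [|w h] vx tau1 tau2; first by [].
apply: contrapT => ndx; have [k hk [vk ndk]] := edge_point_above vx ndx.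
have dxk : desc (POn w h) (POn w k) := desc_edge vx vk (ltW hk).
have x_k : POn w h <> POn w k by case=> h_k; rewrite h_k ltxx in hk.
have := curve_visits_ge3 cs tau0 vk t1_ge0 t1t tt2 t2_le1; rewrite tau1 tau2.
move=> /(_ _ x_k x_k dxk ndk dxk (visits_tau _ vk)).
rewrite deg_edge_interior; last by case: vx => _ fv_h _; lra.
by move=> /leq_trans /(_ (leq_subr _ _)).
Qed.

End MergeTreeSubtrees.

Theorem corollary12 (R : realType) (V : finType) (root : V) (parent : V -> V)
    (fv : V -> R) (le : R -> pt V R -> pt V R -> Prop) (tau : R -> pt V R) :
  merge_tree root parent fv ->
  layer_order root parent fv le ->
  partial_inorder root parent fv le tau ->
  forall x : pt V R, valid root parent fv x ->
  forall t1 t2 : R, 0 <= t1 -> t1 <= t2 -> t2 <= 1 ->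
  tau t1 = x -> tau t2 = x ->
  forall t : R, t1 <= t <= t2 -> desc root parent fv (tau t) x.
Proof.
(* Only the visit counts of [tau] matter. *)
move=> tree _ tau_pio x vx t1 t2 t1_ge0 _ t2_le1 tau1 tau2 t /andP[t1t tt2].
exact: partial_inorder_desc_between tau_pio vx t1_ge0 t1t tt2 t2_le1 tau1 tau2.
Qed.
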